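(* Let $\kappa\in(0,\infty)$. There exists $C\in(0,\infty)$ such that for all $R,N\in[1,\infty)$ $$-C\le\sum_{l=0}^\infty\frac{2l+1}{2R^2\,(1+l(l+1)/R^2)\,(1+l(l+1)/(NR)^2)^\kappa}-\log(N+1)\le C.$$ *)

From HB Require Import structures.
From mathcomp Require Import all_boot all_order all_algebra.
From mathcomp Require Import all_classical all_reals all_analysis.
Set Implicit Arguments. Unset Strict Implicit. Unset Printing Implicit Defensive.
Import Order.TTheory GRing.Theory Num.Theory.
Local Open Scope ring_scope.

Definition summand (R : realType) (kappa Rr N : R) (l : nat) : R :=
  (2 * l%:R + 1) /
  (2 * Rr ^+ 2 * (1 + (l%:R * (l%:R + 1)) / Rr ^+ 2)
     * (1 + (l%:R * (l%:R + 1)) / (N * Rr) ^+ 2) `^ kappa).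

From HB Require Import structures.
From mathcomp Require Import all_boot all_order all_algebra.
From mathcomp Require Import all_classical all_reals all_analysis.
From mathcomp Require Import ring lra.
Import Order.TTheory GRing.Theory Num.Theory.
Local Open Scope ring_scope.

(* Write λ_l = l(l+1) ([sph_eigval]), A = R^2, M = (NR)^2, q_l = (1 + λ_l/M)^(-κ)
   ([damp]) and r_A(l) = (2l+1)/(A + λ_l) ([rterm]), so that the series is
   (1/2) Σ r_A(l) q_l.  Since λ_{l+1} - λ_l ≈ 2l+1, the partial sums of r_A are
   ln((A + n^2)/A) up to a bounded error, uniformly in A >= 1; hence
   Σ_{l<n} (r_A - r_M) is ln(M/A) = 2 ln N up to O(1) once n^2 >= M.  The identity
   r_A q = (r_A - r_M) + r_M q - (1 - q)(r_A - r_M) leaves two bounded sums: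
   Σ r_M q_l = O(1/κ), because the convexity of t^(-κ) gives
   q_l - q_{l+1} >= κ q_{l+1} (2l+2)/(M + λ_{l+1}), so that it telescopes; and
   Σ (1 - q_l)(r_A - r_M) = O(κ + 1), because 1 - q_l <= 2(κ+1) λ_l/(M + λ_l). *)

Section Estimates.
Context {R : realType}.
Implicit Types (a b k w A M Rr N : R) (l n : nat).

Lemma ln_sub_le a b : 0 < a -> 0 < b -> ln b - ln a <= (b - a) / a.
Proof.
move=> a0 b0; rewrite -ln_div ?posrE //.
have -> : b / a = 1 + (b - a) / a by field; rewrite lt0r_neq0.
apply: le_ln1Dx; rewrite mulrBl divff ?lt0r_neq0 //.
by have := divr_gt0 b0 a0; lra.
Qed.

Lemma powRN_tangent_le a b k : 0 < a -> 0 < b -> 0 <= k ->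
  k * ((b - a) / b) * b `^ (- k) <= a `^ (- k) - b `^ (- k).
Proof.
move=> a0 b0 k0.
have ln_ab : (b - a) / b <= ln b - ln a.
  have := ln_sub_le _ _ b0 a0.
  have -> : (a - b) / b = - ((b - a) / b) by ring.
  lra.
have split_a : a `^ (- k) = expR (k * (ln b - ln a)) * b `^ (- k).
  by rewrite /powR !gt_eqF // -expRD; congr expR; ring.
have bern := expR_ge1Dx (k * (ln b - ln a)).
have klog : k * ((b - a) / b) <= k * (ln b - ln a) by exact: ler_wpM2l.
have := powR_ge0 b (- k).
rewrite split_a; nra.
Qed.

Lemma one_sub_powRN_le w k : 1 <= w -> 0 <= k -> 1 - w `^ (- k) <= k * (w - 1).
Proof.
move=> w1 k0; have w0 : 0 < w := lt_le_trans ltr01 w1.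
have ln_w : ln w <= w - 1 by have := ln_sub_le 1 w ltr01 w0; rewrite ln1 subr0 divr1.
have := expR_ge1Dx (- (k * ln w)).
rewrite /powR gt_eqF // mulNr.
have : k * ln w <= k * (w - 1) by exact: ler_wpM2l.
lra.
Qed.

Lemma powRN_le1 w k : 1 <= w -> 0 <= k -> w `^ (- k) <= 1.
Proof.
move=> w1 k0; rewrite powRN invf_le1 ?powR_gt0 ?(lt_le_trans ltr01 w1) //.
by rewrite -(powRr0 w) ler_powR.
Qed.

Lemma ler_sum_telescope_tail (T g : nat -> R) n :
  (forall l, 0 <= T l) -> (forall l, 0 <= g l) ->
  (forall l, T l.+1 <= g l - g l.+1) ->
  \sum_(0 <= l < n) T l <= T 0%N + g 0%N.
Proof.
move=> T0 g0 Tg.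
have tail m : \sum_(0 <= l < m) T l.+1 <= g 0%N - g m.
  rewrite -opprB -telescope_sumr // -sumrN.
  by apply: ler_sum => l _; rewrite opprB.
apply: (@le_trans _ _ (\sum_(0 <= l < n.+1) T l)).
  by rewrite big_nat_recr //= lerDl.
rewrite big_nat_recl // lerD2l; have := tail n; have := g0 n; lra.
Qed.

Definition sph_eigval l : R := l%:R * (l%:R + 1).

Lemma sph_eigval_ge0 l : 0 <= sph_eigval l.
Proof. exact: mulr_ge0. Qed.

Lemma sph_eigvalS l : sph_eigval l.+1 = sph_eigval l + 2 * (l%:R + 1).
Proof. rewrite /sph_eigval -natr1; ring. Qed.

Lemma sph_eigval_bounds l :
  l%:R ^+ 2 <= sph_eigval l <= (l%:R + 1) ^+ 2.
Proof.
have l0 : 0 <= l%:R :> R by [].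
by rewrite /sph_eigval; apply/andP; split; nra.
Qed.

Definition rterm A l : R := (2 * l%:R + 1) / (A + sph_eigval l).

Lemma rterm_ge0 A l : 0 <= A -> 0 <= rterm A l.
Proof.
move=> A0; have l0 : 0 <= l%:R :> R by [].
by apply: divr_ge0; [lra | have := sph_eigval_ge0 l; lra].
Qed.

Lemma ler_rterm A M l : 0 < A <= M -> rterm M l <= rterm A l.
Proof.
move=> /andP[A0 AM]; have := sph_eigval_ge0 l; have : 0 <= l%:R :> R by [].
by move=> ? ?; rewrite /rterm ler_pM2l ?lef_pV2 ?posrE ?lerD2r //; lra.
Qed.

Lemma shifted_sqr_gap_le [A L : R] : 1 <= A -> 0 <= L ->
  (2 * L + 1) / (A + L ^+ 2) - (2 * L + 1) / (A + (L + 1) ^+ 2)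
  <= 8 / (L + 1) - 8 / (L + 2).
Proof.
move=> A1 L0.
have d1 : 0 < A + L ^+ 2 by nra.
have d2 : 0 < A + (L + 1) ^+ 2 by nra.
rewrite -subr_ge0.
have -> : 8 / (L + 1) - 8 / (L + 2) -
    ((2 * L + 1) / (A + L ^+ 2) - (2 * L + 1) / (A + (L + 1) ^+ 2)) =
  (8 * (A + L ^+ 2) * (A + (L + 1) ^+ 2) - (2 * L + 1) ^+ 2 * (L + 1) * (L + 2))
  / ((L + 1) * (L + 2) * (A + L ^+ 2) * (A + (L + 1) ^+ 2)).
  by field; rewrite !lt0r_neq0 //; lra.
apply: divr_ge0; last by rewrite !mulr_ge0 //; nra.
have : 0 <= (A - 1) * L ^+ 2 by nra.
have : 0 <= (A - 1) * L by nra.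
nra.
Qed.

Lemma rterm_ln_dist A l : 1 <= A ->
  `|rterm A l - (ln (A + (l%:R + 1) ^+ 2) - ln (A + l%:R ^+ 2))|
  <= 8 / (l%:R + 1) - 8 / (l%:R + 2).
Proof.
move=> A1; have l0 : 0 <= l%:R :> R by [].
have lam0 := sph_eigval_ge0 l.
have /andP[lam_lo lam_hi] := sph_eigval_bounds l.
set a := A + l%:R ^+ 2; set b := A + (l%:R + 1) ^+ 2.
have a0 : 0 < a by rewrite /a; nra.
have b0 : 0 < b by rewrite /b; nra.
have ba : b - a = 2 * l%:R + 1 by rewrite /a /b; ring.
have ln_hi : ln b - ln a <= (2 * l%:R + 1) / a by rewrite -ba; exact: ln_sub_le.
have ln_lo : (2 * l%:R + 1) / b <= ln b - ln a.
  have := ln_sub_le _ _ b0 a0.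
  have -> : (a - b) / b = - ((2 * l%:R + 1) / b) by rewrite -ba; ring.
  lra.
have r_hi : rterm A l <= (2 * l%:R + 1) / a.
  by rewrite /rterm ler_pM2l ?lef_pV2 ?posrE /a ?lerD2l //; lra.
have r_lo : (2 * l%:R + 1) / b <= rterm A l.
  by rewrite /rterm ler_pM2l ?lef_pV2 ?posrE /b ?lerD2l //; lra.
have := shifted_sqr_gap_le A1 l0; rewrite -/a -/b.
rewrite ler_norml; lra.
Qed.

Lemma sum_rterm_ln_dist A n : 1 <= A ->
  `|\sum_(0 <= l < n) rterm A l - (ln (A + n%:R ^+ 2) - ln A)| <= 8.
Proof.
move=> A1.
have lnE : ln (A + n%:R ^+ 2) - ln A
    = \sum_(0 <= l < n) (ln (A + l.+1%:R ^+ 2) - ln (A + l%:R ^+ 2)).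
  by rewrite (telescope_sumr (fun l => ln (A + l%:R ^+ 2))) // expr0n addr0.
rewrite lnE -sumrB (le_trans (ler_norm_sum _ _ _)) //.
have errE : \sum_(0 <= l < n) (8 / (l%:R + 1) - 8 / (l.+1%:R + 1)) = 8 - 8 / (n%:R + 1) :> R.
  rewrite (telescope_sumr_eq (fun l => - (8 / (l%:R + 1)))) //=; last by move=> l _; ring.
  by rewrite add0r divr1 opprK addrC.
apply: (@le_trans _ _ (8 - 8 / (n%:R + 1))); last first.
  by rewrite lerBlDr lerDl divr_ge0 // addr_ge0.
rewrite -errE; apply: ler_sum => l _.
have -> : l.+1%:R + 1 = l%:R + 2 :> R by rewrite -natr1; ring.
by rewrite -natr1; exact: rterm_ln_dist.
Qed.

Definition damp k M l : R := (1 + sph_eigval l / M) `^ (- k).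

Lemma damp_ge0 k M l : 0 <= damp k M l.
Proof. exact: powR_ge0. Qed.

Lemma damp0 k M : damp k M 0 = 1.
Proof. by rewrite /damp /sph_eigval mul0r mul0r addr0 powR1. Qed.

Lemma damp_arg_ge1 M l : 0 < M -> 1 <= 1 + sph_eigval l / M.
Proof. by move=> M0; rewrite lerDl divr_ge0 ?sph_eigval_ge0 ?ltW. Qed.

Lemma damp_le1 k M l : 0 <= k -> 0 < M -> damp k M l <= 1.
Proof. by move=> k0 M0; apply: powRN_le1 => //; exact: damp_arg_ge1. Qed.

Lemma damp_telescope k M l : 0 <= k -> 0 < M ->
  k * (2 * (l%:R + 1) / (M + sph_eigval l.+1)) * damp k M l.+1
  <= damp k M l - damp k M l.+1.
Proof.
move=> k0 M0.
have w0 j : 0 < 1 + sph_eigval j / M by exact: lt_le_trans ltr01 (damp_arg_ge1 M j M0).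
have lam0 := sph_eigval_ge0 l; have l0 : 0 <= l%:R :> R by [].
have -> : 2 * (l%:R + 1) / (M + sph_eigval l.+1)
    = (1 + sph_eigval l.+1 / M - (1 + sph_eigval l / M)) / (1 + sph_eigval l.+1 / M).
  by rewrite sph_eigvalS; field; rewrite !lt0r_neq0 //; lra.
exact: powRN_tangent_le.
Qed.

Lemma one_sub_damp_le k M l : 0 <= k -> 0 < M ->
  1 - damp k M l <= 2 * (k + 1) * sph_eigval l / (M + sph_eigval l).
Proof.
move=> k0 M0; have lam0 := sph_eigval_ge0 l; set lam := sph_eigval l in lam0 *.
have D0 : 0 < M + lam by lra.
have [lam_le | lam_gt] := lerP lam M.
- have := one_sub_powRN_le _ _ (damp_arg_ge1 M l M0) k0; rewrite -/(damp k M l) -/lam.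
  have -> : 1 + lam / M - 1 = lam / M by ring.
  have : k * (lam / M) <= 2 * (k + 1) * lam / (M + lam).
    rewrite -subr_ge0.
    have -> : 2 * (k + 1) * lam / (M + lam) - k * (lam / M)
        = lam * (k * (M - lam) + 2 * M) / (M * (M + lam)).
      by field; rewrite !lt0r_neq0.
    by apply: divr_ge0; [apply: mulr_ge0 => //; nra | nra].
  lra.
- have : 1 <= 2 * (k + 1) * lam / (M + lam) by rewrite ler_pdivlMr //; nra.
  have := damp_ge0 k M l; lra.
Qed.

Lemma sum_rterm_damp_le k M n : 0 < k -> 1 <= M ->
  \sum_(0 <= l < n) rterm M l * damp k M l <= 1 + 3 / 2 * k^-1.
Proof.
move=> k0 M1; have M0 : 0 < M by lra.
have c0 : 0 <= 3 / 2 * k^-1 by rewrite mulr_ge0 ?invr_ge0 //; lra.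
apply: (le_trans (ler_sum_telescope_tail _ (fun l => 3 / 2 * k^-1 * damp k M l) n _ _ _)).
- by move=> l; rewrite mulr_ge0 ?rterm_ge0 ?damp_ge0 ?ltW.
- by move=> l; rewrite mulr_ge0 ?damp_ge0.
- move=> l /=; rewrite -mulrBr.
  have := damp_telescope k M l (ltW k0) M0.
  have := damp_ge0 k M l.+1; have := sph_eigval_ge0 l.+1.
  have l0 : 0 <= l%:R :> R by [].
  rewrite /rterm -[l.+1%:R]natr1; set q := damp k M l.+1; set lam := sph_eigval l.+1.
  move=> lam0 q0 tele.
  have D0 : 0 < M + lam by lra.
  apply: (le_trans _ (ler_wpM2l c0 tele)).
  rewrite -subr_ge0.
  have -> : 3 / 2 * k^-1 * (k * (2 * (l%:R + 1) / (M + lam)) * q)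
      - (2 * (l%:R + 1) + 1) / (M + lam) * q = l%:R * q / (M + lam).
    by field; rewrite !lt0r_neq0.
  by rewrite divr_ge0 ?mulr_ge0 // ltW.
- by rewrite damp0 /rterm /sph_eigval mulr0 mul0r add0r addr0 !mulr1 mul1r lerD2r invf_le1.
Qed.

Lemma sum_rterm_tail_le M n : 1 <= M ->
  \sum_(0 <= l < n) rterm M l * (M / (M + sph_eigval l)) <= 5 / 2.
Proof.
move=> M1; have M0 : 0 < M by lra.
have D0 j : 0 < M + sph_eigval j by have := sph_eigval_ge0 j; lra.
apply: (@le_trans _ _ (1 + 3 / 2)); last lra.
apply: (le_trans (ler_sum_telescope_tail _ (fun l => 3 / 2 * (M / (M + sph_eigval l))) n _ _ _)).
- by move=> l; rewrite mulr_ge0 ?rterm_ge0 ?divr_ge0 ?ltW.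
- by move=> l; rewrite mulr_ge0 ?divr_ge0 ?ltW.
- move=> l /=; rewrite /rterm sph_eigvalS -[l.+1%:R]natr1.
  have := sph_eigval_ge0 l; have l0 : 0 <= l%:R :> R by [].
  set lam := sph_eigval l => lam0.
  rewrite -subr_ge0.
  have -> : 3 / 2 * (M / (M + lam)) - 3 / 2 * (M / (M + (lam + 2 * (l%:R + 1))))
      - (2 * (l%:R + 1) + 1) / (M + (lam + 2 * (l%:R + 1))) * (M / (M + (lam + 2 * (l%:R + 1))))
    = M * (3 * (l%:R + 1) * (M + (lam + 2 * (l%:R + 1))) - (2 * l%:R + 3) * (M + lam))
      / ((M + lam) * (M + (lam + 2 * (l%:R + 1))) ^+ 2).
    by field; rewrite !lt0r_neq0 //; lra.
  by apply: divr_ge0; [apply: mulr_ge0; nra | apply: mulr_ge0; nra].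
- rewrite /rterm /sph_eigval mulr0 mul0r add0r addr0 divff ?lt0r_neq0 // !mulr1 mul1r.
  by rewrite lerD2r invf_le1.
Qed.

Lemma rterm_sub A M l : 0 < A -> 0 < M ->
  rterm A l - rterm M l
  = (2 * l%:R + 1) * (M - A) / ((A + sph_eigval l) * (M + sph_eigval l)).
Proof.
move=> A0 M0; have := sph_eigval_ge0 l => lam0.
by rewrite /rterm; field; rewrite !lt0r_neq0 //; lra.
Qed.

Lemma rterm_damp_le k A M l : 0 <= k -> 0 < A <= M ->
  rterm A l * damp k M l <= rterm A l - rterm M l + rterm M l * damp k M l.
Proof.
move=> k0 /[dup] AM /andP[A0 le_AM].
have := ler_rterm A M l AM; have := damp_le1 k M l k0 (lt_le_trans A0 le_AM).
have := rterm_ge0 M l (ltW (lt_le_trans A0 le_AM)); have := damp_ge0 k M l.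
nra.
Qed.

Lemma rterm_damp_ge k A M l : 0 <= k -> 0 < A <= M ->
  rterm A l - rterm M l - 2 * (k + 1) * (rterm M l * (M / (M + sph_eigval l)))
  <= rterm A l * damp k M l.
Proof.
move=> k0 /andP[A0 AM]; have M0 : 0 < M := lt_le_trans A0 AM.
have lam0 := sph_eigval_ge0 l; have l0 : 0 <= l%:R :> R by [].
have := one_sub_damp_le k M l k0 M0; have := damp_ge0 k M l.
have := rterm_ge0 M l (ltW M0).
have gap := rterm_sub A M l A0 M0.
rewrite /rterm in gap *; set q := damp k M l; set lam := sph_eigval l in lam0 gap *.
move=> rM0 q0 one_sub_q.
have gap0 : 0 <= (2 * l%:R + 1) * (M - A) / ((A + lam) * (M + lam)).
  by rewrite divr_ge0 ?mulr_ge0 //; lra.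
have loss : (1 - q) * ((2 * l%:R + 1) * (M - A) / ((A + lam) * (M + lam)))
    <= 2 * (k + 1) * ((2 * l%:R + 1) / (M + lam) * (M / (M + lam))).
  apply: (le_trans (ler_wpM2r gap0 one_sub_q)).
  rewrite -subr_ge0.
  have -> : 2 * (k + 1) * ((2 * l%:R + 1) / (M + lam) * (M / (M + lam)))
      - 2 * (k + 1) * lam / (M + lam) * ((2 * l%:R + 1) * (M - A) / ((A + lam) * (M + lam)))
    = 2 * (k + 1) * (2 * l%:R + 1) * A * (M + lam) / ((M + lam) ^+ 2 * (A + lam)).
    by field; rewrite !lt0r_neq0 //; lra.
  by rewrite divr_ge0 ?mulr_ge0 //; lra.
nra.
Qed.

Lemma sum_rterm_damp_ln_upper k A M n : 0 < k -> 1 <= A <= M ->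
  \sum_(0 <= l < n) rterm A l * damp k M l <= ln M - ln A + 17 + 3 / 2 * k^-1.
Proof.
move=> k0 /andP[A1 AM]; have A0 : 0 < A by lra.
have AM' : 0 < A <= M by rewrite A0 AM.
rewrite (le_trans (ler_sum _ (fun l _ => rterm_damp_le k A M l (ltW k0) AM'))) //.
rewrite big_split /= sumrB.
have := sum_rterm_ln_dist A n A1; have := sum_rterm_ln_dist M n (le_trans A1 AM).
rewrite !ler_norml => /andP[hM _] /andP[_ hA].
have : ln (A + n%:R ^+ 2) <= ln (M + n%:R ^+ 2).
  by rewrite ler_ln ?posrE ?lerD2r //; apply: ltr_wpDr => //; lra.
have := sum_rterm_damp_le k M n k0 (le_trans A1 AM).
lra.
Qed.

Lemma sum_rterm_damp_ln_lower k A M n : 0 < k -> 1 <= A <= M -> M <= n%:R ^+ 2 ->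
  ln M - ln A - 22 - 5 * k <= \sum_(0 <= l < n) rterm A l * damp k M l.
Proof.
move=> k0 /andP[A1 AM] Mn; have A0 : 0 < A by lra.
have AM' : 0 < A <= M by rewrite A0 AM.
apply: le_trans (ler_sum _ (fun l _ => rterm_damp_ge k A M l (ltW k0) AM')).
rewrite !sumrB -mulr_sumr.
have := sum_rterm_ln_dist A n A1; have := sum_rterm_ln_dist M n (le_trans A1 AM).
rewrite !ler_norml => /andP[_ hM] /andP[hA _].
have : ln (M + n%:R ^+ 2) - ln (A + n%:R ^+ 2) <= 1.
  apply: le_trans (ln_sub_le _ _ _ _) _; [lra | lra |].
  by rewrite ler_pdivrMr; lra.
have := sum_rterm_tail_le M n (le_trans A1 AM).
have : 0 <= 2 * (k + 1) by lra.
nra.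
Qed.

Lemma summandE k Rr N l : 0 < Rr -> 0 < N ->
  summand k Rr N l = rterm (Rr ^+ 2) l * damp k ((N * Rr) ^+ 2) l / 2.
Proof.
move=> R0 N0; have lam0 := sph_eigval_ge0 l.
have M0 : 0 < (N * Rr) ^+ 2 by rewrite exprn_gt0 ?mulr_gt0.
have w0 : 0 < 1 + sph_eigval l / (N * Rr) ^+ 2.
  exact: lt_le_trans ltr01 (damp_arg_ge1 _ l M0).
rewrite /summand /rterm /damp powRN -/(sph_eigval l).
have := powR_gt0 k w0; have : 0 < Rr ^+ 2 by rewrite exprn_gt0.
by move=> ? ?; field; rewrite !lt0r_neq0 //; lra.
Qed.

Lemma nneseries_fin_bounds (u : nat -> R) a b : (forall l, 0 <= u l) ->
  (forall n, \sum_(0 <= l < n) u l <= b) ->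
  (exists n, a <= \sum_(0 <= l < n) u l) ->
  exists2 s : R, (\sum_(0 <= l <oo) (u l)%:E = s%:E)%E & a <= s <= b.
Proof.
move=> u0 ub [m lb].
have u0E l : (0 <= (u l)%:E)%E by rewrite lee_fin.
have le_b : (\sum_(0 <= l <oo) (u l)%:E <= b%:E)%E.
  apply: lime_le; first exact: is_cvg_nneseries.
  by apply: nearW => n; rewrite sumEFin lee_fin.
have ge_a : (a%:E <= \sum_(0 <= l <oo) (u l)%:E)%E.
  by apply: le_trans (nneseries_lim_ge m _); rewrite ?sumEFin ?lee_fin.
move: le_b ge_a; case: (\sum_(0 <= l <oo) (u l)%:E)%E => [s | | ] //= s_le a_le.
by exists s; rewrite -?lee_fin ?s_le ?a_le.
Qed.

Lemma sqr_scale_bounds Rr N : 1 <= Rr -> 1 <= N -> 1 <= Rr ^+ 2 <= (N * Rr) ^+ 2.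
Proof.
move=> R1 N1; have A1 : 1 <= Rr ^+ 2 by rewrite expr_ge1 // (le_trans ler01 R1).
by rewrite A1 exprMn ler_peMl ?sqr_ge0 // expr_ge1 // (le_trans ler01 N1).
Qed.

Lemma ln_sqr_scale Rr N : 0 < Rr -> 0 < N ->
  ln ((N * Rr) ^+ 2) - ln (Rr ^+ 2) = 2 * ln N.
Proof. by move=> R0 N0; rewrite exprMn lnM ?posrE ?exprn_gt0 // !lnXn // !mulr2n; ring. Qed.

Lemma ln_succ_bounds N : 1 <= N -> ln N <= ln (N + 1) <= ln N + 1.
Proof.
move=> N1; have N0 : 0 < N by lra.
rewrite ler_ln ?posrE ?lerDl ?ltr_wpDr ?ler01 //=.
have := ln_sub_le N (N + 1) N0 (ltr_wpDr ler01 N0).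
have : 1 / N <= 1 by rewrite mul1r invf_le1.
rewrite addrAC subrr add0r; lra.
Qed.

Lemma summand_ge0 k Rr N l : 0 < Rr -> 0 < N -> 0 <= summand k Rr N l.
Proof.
by move=> R0 N0; rewrite summandE // divr_ge0 // mulr_ge0 ?damp_ge0 ?rterm_ge0 ?sqr_ge0.
Qed.

Lemma sum_summandE k Rr N n : 0 < Rr -> 0 < N ->
  \sum_(0 <= l < n) summand k Rr N l
  = (\sum_(0 <= l < n) rterm (Rr ^+ 2) l * damp k ((N * Rr) ^+ 2) l) / 2.
Proof. by move=> R0 N0; rewrite mulr_suml; apply: eq_bigr => l _; rewrite summandE. Qed.

Lemma sum_summand_upper k Rr N n : 0 < k -> 1 <= Rr -> 1 <= N ->
  \sum_(0 <= l < n) summand k Rr N l <= ln (N + 1) + (9 + k^-1).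
Proof.
move=> k0 R1 N1; have R0 : 0 < Rr by lra.
have N0 : 0 < N by lra.
rewrite sum_summandE //.
have := sum_rterm_damp_ln_upper k _ _ n k0 (sqr_scale_bounds _ _ R1 N1).
rewrite ln_sqr_scale //; have := ln_succ_bounds N N1; have : 0 < k^-1 by rewrite invr_gt0.
lra.
Qed.

Lemma sum_summand_lower k Rr N : 0 < k -> 1 <= Rr -> 1 <= N ->
  exists n, ln (N + 1) - (12 + 3 * k) <= \sum_(0 <= l < n) summand k Rr N l.
Proof.
move=> k0 R1 N1; have R0 : 0 < Rr by lra.
have N0 : 0 < N by lra.
have /andP[A1 AM] := sqr_scale_bounds _ _ R1 N1.
set M := (N * Rr) ^+ 2 in AM *; exists (Num.bound M).
have Mn : M < (Num.bound M)%:R by apply: archi_boundP; lra.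
have Mn2 : M <= (Num.bound M)%:R ^+ 2 by nra.
rewrite sum_summandE //.
have := sum_rterm_damp_ln_lower k _ _ _ k0 (sqr_scale_bounds _ _ R1 N1) Mn2.
rewrite ln_sqr_scale //; have := ln_succ_bounds N N1.
lra.
Qed.

End Estimates.

Theorem mainTheorem8 (R : realType) (kappa : R) (hkappa : 0 < kappa) :
  exists C : R, 0 < C /\
    forall Rr N : R, 1 <= Rr -> 1 <= N ->
      ((- C)%:E <= (\sum_(0 <= l <oo) (summand kappa Rr N l)%:E) - (ln (N + 1))%:E
       /\ (\sum_(0 <= l <oo) (summand kappa Rr N l)%:E) - (ln (N + 1))%:E <= C%:E)%E.
Proof.
have kinv0 : 0 < kappa^-1 by rewrite invr_gt0.
exists (12 + 3 * kappa + kappa^-1); split; first lra.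
move=> Rr N R1 N1.
have nonneg l : 0 <= summand kappa Rr N l by apply: summand_ge0; lra.
have [s -> /andP[s_lo s_hi]] := nneseries_fin_bounds _ _ _ nonneg
  (fun n => sum_summand_upper kappa Rr N n hkappa R1 N1)
  (sum_summand_lower kappa Rr N hkappa R1 N1).
by rewrite -EFinB !lee_fin; split; lra.
Qed.
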